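(* Let $K$ be a field containing a primitive $n$-th root of unity $\zeta$ with $\zeta^2\ne1$, let $0\ne x\in K$, let $L\supseteq K$ be a field, and let $\mathcal J_x=\mathcal J_x(1)$. For $b,c\in L$ with $bc=x$ let $\mathtt P(b,c)=L\boldsymbol u$ be the one-dimensional $\mathcal J_x\otimes_KL$-module with $\underline e_0\boldsymbol u=0$, $\underline e_1\boldsymbol u=b\boldsymbol u$, $\underline e_2\boldsymbol u=c\boldsymbol u$. Then for $b,c,e,f\in L$ with $bc=ef=x$, $$\mathrm{Ext}^1_{\mathcal J_x\otimes L}\big(\mathtt P(b,c),\mathtt P(e,f)\big)\cong\begin{cases}L,& b=\zeta e\text{ and } f=\zeta c,\\ L,& b=\zeta^2e\text{ and } f=\zeta^2c,\\ L,& b=e\text{ and } c=f,\\ 0,&\text{otherwise.}\end{cases}$$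
   Context: $\mathcal J_x(1)$ is the $K$-algebra generated by $\underline e_0,\underline e_1,\underline e_2$ subject to $\underline e_0\underline e_1=\zeta\underline e_1\underline e_0$, $\underline e_2\underline e_0=\zeta\underline e_0\underline e_2$, $\underline e_2\underline e_1-\zeta^2\underline e_1\underline e_2=x\underline e_0+x(1-\zeta^2)$. The relations force $bc=x$ for a one-dimensional module on which $\underline e_0$ acts by zero. $\mathrm{Ext}^1$ is computed over $\mathcal J_x\otimes_KL$ (equivalently as $L$-linear Hochschild cohomology $\mathrm{Der}(\mathcal J_x,\mathrm{Hom}_L(M_1,M_2))/\{\text{inner derivations}\}$). *)

From HB Require Import structures.
From mathcomp Require Import all_boot all_order all_algebra.
Set Implicit Arguments. Unset Strict Implicit. Unset Printing Implicit Defensive.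
Import GRing.Theory.
Local Open Scope ring_scope.

(* A module over J_x (x) L on L^m: matrices (A0,A1,A2) for e0,e1,e2 satisfying
   the defining relations of J_x(1), with zeta and x read in L. *)
Definition is_Jrep (L : fieldType) (zeta x : L) (m : nat)
  (A0 A1 A2 : 'M[L]_m) : Prop :=
  [/\ A0 *m A1 = zeta *: (A1 *m A0),
      A2 *m A0 = zeta *: (A0 *m A2) &
      A2 *m A1 - zeta ^+ 2 *: (A1 *m A2) = x *: A0 + (x * (1 - zeta ^+ 2)) *: 1%:M].

Definition utri (L : fieldType) (a t d : L) : 'M[L]_2 :=
  \matrix_(i < 2, j < 2)
    if (i : nat) == 0%N then (if (j : nat) == 0%N then a else t)
    else (if (j : nat) == 0%N then 0 else d).

(* Extensions 0 -> P(e,f) -> E -> P(b,c) -> 0 with E = L^2, P(e,f) = first line.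
   Generator e_k acts on E by utri (chi2 e_k) t_k (chi1 e_k), where
   chi1 = (0,b,c) is the character of P(b,c), chi2 = (0,e,f) that of P(e,f).
   The triple (t0,t1,t2) is the cocycle (= derivation J -> Hom_L(P(b,c),P(e,f))
   on generators). *)
Definition ext_cocycle (L : fieldType) (zeta x b c e f t0 t1 t2 : L) : Prop :=
  is_Jrep zeta x (utri 0 t0 0) (utri e t1 b) (utri f t2 c).

(* inner derivations / split extensions:  t_k = lam * chi1(e_k) - chi2(e_k) * lam *)
Definition ext_coboundary (L : fieldType) (b c e f t0 t1 t2 : L) : Prop :=
  exists lam : L, [/\ t0 = lam * 0 - 0 * lam, t1 = lam * b - e * lam
                    & t2 = lam * c - f * lam].

(* Ext^1 = cocycles / coboundaries is isomorphic to L (one-dimensional over L) *)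
Definition Ext1_iso_L (L : fieldType) (zeta x b c e f : L) : Prop :=
  exists z0 z1 z2 : L,
    [/\ ext_cocycle zeta x b c e f z0 z1 z2,
        ~ ext_coboundary b c e f z0 z1 z2 &
        forall t0 t1 t2, ext_cocycle zeta x b c e f t0 t1 t2 ->
          exists a : L, ext_coboundary b c e f (t0 - a * z0) (t1 - a * z1) (t2 - a * z2)].

Definition Ext1_zero (L : fieldType) (zeta x b c e f : L) : Prop :=
  forall t0 t1 t2, ext_cocycle zeta x b c e f t0 t1 t2 ->
    ext_coboundary b c e f t0 t1 t2.

(* An extension of P(b,c) by P(e,f) is realised on L^2 by upper triangular
   matrices, so it is determined by the off-diagonal entries (t0,t1,t2) of
   the three generators.  Multiplying out these 2x2 matrices shows that, when
   bc = ef = x != 0, the relations of J_x(1) hold iff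
       t0 b = z e t0   and   x e b t0 = (b - z^2 e) phi(t1,t2),
   where phi(t1,t2) = x t1 + e b t2 (lemma cocycleP); for b != e the split
   extensions are exactly those with t0 = 0 and phi(t1,t2) = 0 (lemma
   coboundaryP), while for b = e only the zero triple splits.
   Ext^1 is then read off by comparing b with z e, z^2 e and e:
   - b generic: every cocycle has t0 = 0, then phi = 0, so it splits;
   - b = z e, b = z^2 e, b = e: the linear form t0, phi, resp. t1/e vanishes
     on a cocycle iff it splits, and is not identically zero, so Ext^1 is a
     line (lemma Ext1_iso_L_of_functional).
   Proposition 6.1 follows once z = iota zeta is seen to satisfy z != 0 and
   z^2 != 1, and b = w e is seen to force f = w c (lemma partner_shift). *)

From HB Require Import structures.
From mathcomp Require Import all_boot all_order all_algebra ring.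
Set Implicit Arguments. Unset Strict Implicit. Unset Printing Implicit Defensive.
Import GRing.Theory.
Local Open Scope ring_scope.

Section UpperTriangular.
Variable L : fieldType.
Implicit Types a t d k : L.

Lemma utri_mul a t d a' t' d' :
  utri a t d *m utri a' t' d' = utri (a * a') (a * t' + t * d') (d * d').
Proof.
apply/matrixP=> i j; rewrite !mxE !big_ord_recl big_ord0 !mxE.
by case: i => [[|[|//]] ?]; case: j => [[|[|//]] ?] /=; ring.
Qed.

Lemma utri_scale k a t d : k *: utri a t d = utri (k * a) (k * t) (k * d).
Proof.
apply/matrixP=> i j; rewrite !mxE.
by case: i => [[|[|//]] ?]; case: j => [[|[|//]] ?] /=; ring.
Qed.

Lemma utri_add a t d a' t' d' :
  utri a t d + utri a' t' d' = utri (a + a') (t + t') (d + d').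
Proof.
apply/matrixP=> i j; rewrite !mxE.
by case: i => [[|[|//]] ?]; case: j => [[|[|//]] ?] /=; ring.
Qed.

Lemma utri_opp a t d : - utri a t d = utri (- a) (- t) (- d).
Proof.
apply/matrixP=> i j; rewrite !mxE.
by case: i => [[|[|//]] ?]; case: j => [[|[|//]] ?] /=; ring.
Qed.

Lemma utri1 : 1%:M = utri 1 0 1 :> 'M[L]_2.
Proof.
by apply/matrixP=> i j; rewrite !mxE; case: i => [[|[|//]] ?]; case: j => [[|[|//]] ?].
Qed.

Lemma utri_eq a t d a' t' d' :
  utri a t d = utri a' t' d' <-> [/\ a = a', t = t' & d = d'].
Proof.
split=> [/matrixP E|[-> -> ->]] //.
by split; [move: (E 0 0) | move: (E 0 1) | move: (E 1 1)]; rewrite !mxE.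
Qed.

End UpperTriangular.

Section Extensions.
Variables (L : fieldType) (z x b c e f : L).
Hypotheses (hbc : b * c = x) (hef : e * f = x).

(* The module relations for an extension, entry by entry: the diagonal
   entries hold automatically because bc = ef = x. *)
Lemma cocycle_equations t0 t1 t2 :
  ext_cocycle z x b c e f t0 t1 t2 <->
  [/\ t0 * b = z * (e * t0), f * t0 = z * (t0 * c) &
      x * t0 = f * t1 + t2 * b - z ^+ 2 * (e * t2 + t1 * c)].
Proof.
rewrite /ext_cocycle /is_Jrep utri1 !utri_mul !utri_scale utri_opp !utri_add.
split.
  case=> /utri_eq[_ E1 _] /utri_eq[_ E2 _] /utri_eq[_ E3 _].
  by rewrite !(mul0r, mulr0, addr0, add0r) in E1 E2 E3.
case=> E1 E2 E3; split; apply/utri_eq; split;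
  rewrite ?(mul0r, mulr0, addr0, add0r, mulr1) //; ring: E1 E2 E3 hbc hef.
Qed.

Hypothesis hx : x != 0.

Let hb0 : b != 0. Proof. by apply: contraNneq hx => hb; rewrite -hbc hb mul0r. Qed.
Let he0 : e != 0. Proof. by apply: contraNneq hx => he; rewrite -hef he mul0r. Qed.
Let hc : c = x / b. Proof. by rewrite -hbc; field. Qed.
Let hf : f = x / e. Proof. by rewrite -hef; field. Qed.

(* Because c = x/b and f = x/e, a shift b = w e of the first parameters
   forces the shift f = w c of the second ones. *)
Lemma partner_shift w : b = w * e -> f = w * c.
Proof.
move=> hb; apply: (mulfI (mulf_neq0 he0 hb0)); rewrite hf hc.
by transitivity (b * x); [field; rewrite he0 | rewrite {1}hb; field; rewrite hb0].
Qed.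

(* The linear form phi governing the e_2 e_1 relation of an extension. *)
Definition cocycle_form (t1 t2 : L) : L := x * t1 + e * b * t2.

Lemma cocycleP t0 t1 t2 :
  ext_cocycle z x b c e f t0 t1 t2 <->
  t0 * b = z * e * t0 /\ x * e * b * t0 = (b - z ^+ 2 * e) * cocycle_form t1 t2.
Proof.
have ebx : x * e * b * t0 = e * b * (x * t0) by ring.
rewrite cocycle_equations // /cocycle_form ebx; split.
  case=> E1 _ ->; split; first by rewrite E1 mulrA.
  by rewrite hc hf; field; rewrite hb0 he0.
case=> E1 E3; split.
- by rewrite E1 mulrA.
- have /eqP : t0 * (b - z * e) = 0 by rewrite mulrBr E1; ring.
  rewrite mulf_eq0 subr_eq0 => /orP[/eqP -> | /eqP hb]; first by ring.
  by rewrite (partner_shift hb); ring.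
- apply: (mulfI (mulf_neq0 he0 hb0)); rewrite E3 hc hf.
  by field; rewrite hb0 he0.
Qed.

Lemma cocycle_form_subr a t1 t2 s1 s2 :
  cocycle_form (t1 - a * s1) (t2 - a * s2) = cocycle_form t1 t2 - a * cocycle_form s1 s2.
Proof. by rewrite /cocycle_form; ring. Qed.

Lemma cocycle_form_eq0P t1 t2 : cocycle_form t1 t2 = 0 <-> t2 = - x * t1 / (e * b).
Proof.
rewrite /cocycle_form; split=> [E | ->]; last by field; rewrite hb0 he0.
apply: (mulfI (mulf_neq0 he0 hb0)); rewrite (canRL (addKr (x * t1)) E).
by field; rewrite hb0 he0.
Qed.

Lemma cocycle_subr a t0 t1 t2 s0 s1 s2 :
  ext_cocycle z x b c e f t0 t1 t2 -> ext_cocycle z x b c e f s0 s1 s2 ->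
  ext_cocycle z x b c e f (t0 - a * s0) (t1 - a * s1) (t2 - a * s2).
Proof.
move=> /cocycleP[Et1 Et3] /cocycleP[Es1 Es3]; apply/cocycleP; split.
  by rewrite mulrBl Et1 -(mulrA a) Es1; ring.
by rewrite cocycle_form_subr [RHS]mulrBr -Et3 mulrCA -Es3; ring.
Qed.

(* For b != e the coboundaries lambda (0, b - e, c - f) are the triples
   with t0 = 0 and phi = 0, since e b (c - f) = - x (b - e). *)
Lemma coboundaryP : b != e -> forall t0 t1 t2,
  ext_coboundary b c e f t0 t1 t2 <-> t0 = 0 /\ cocycle_form t1 t2 = 0.
Proof.
move=> hbe t0 t1 t2; have hbe' : b - e != 0 by rewrite subr_eq0.
split=> [[lam [-> -> ->]] | [-> /cocycle_form_eq0P ->]].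
  by split; [ring | rewrite /cocycle_form hc hf; field; rewrite hb0 he0].
exists (t1 / (b - e)); split; [ring | | rewrite hc hf]; field; by rewrite ?hbe' ?hb0 ?he0.
Qed.

Lemma coboundary_diagP : b = e -> forall t0 t1 t2,
  ext_coboundary b c e f t0 t1 t2 <-> [/\ t0 = 0, t1 = 0 & t2 = 0].
Proof.
move=> hbe t0 t1 t2; have hcf : f = c by rewrite (@partner_shift 1) ?mul1r.
split=> [[lam [-> -> ->]] | [-> -> ->]]; last by exists 0; split; ring.
by rewrite hbe hcf; split; ring.
Qed.

Lemma cocycle_head_eq0 t0 t1 t2 : b != z * e ->
  ext_cocycle z x b c e f t0 t1 t2 -> t0 = 0.
Proof.
move=> hbz /cocycleP[E1 _]; have /eqP : t0 * (b - z * e) = 0.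
  by rewrite mulrBr E1; ring.
by rewrite mulf_eq0 subr_eq0 (negPf hbz) orbF => /eqP.
Qed.

Lemma cocycle_form_eq0 t1 t2 : b != z ^+ 2 * e ->
  ext_cocycle z x b c e f 0 t1 t2 -> cocycle_form t1 t2 = 0.
Proof.
move=> hbz /cocycleP[_ E3]; move: E3; rewrite mulr0 => /esym/eqP.
by rewrite mulf_eq0 subr_eq0 (negPf hbz) => /eqP.
Qed.

Lemma Ext1_zero_generic :
  b != z * e -> b != z ^+ 2 * e -> b != e -> Ext1_zero z x b c e f.
Proof.
move=> hb1 hb2 hbe t0 t1 t2 Z; have ht0 := cocycle_head_eq0 hb1 Z.
by apply/(coboundaryP hbe); split => //; apply: cocycle_form_eq0 => //; rewrite -ht0.
Qed.

(* Ext^1 is a line as soon as some linear form psi on triples kills all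
   coboundaries, detects them among cocycles, and takes the value 1 on some
   cocycle s; then s spans the quotient. *)
Lemma Ext1_iso_L_of_functional (psi : L -> L -> L -> L) s0 s1 s2 :
  (forall a t0 t1 t2 r0 r1 r2,
     psi (t0 - a * r0) (t1 - a * r1) (t2 - a * r2) = psi t0 t1 t2 - a * psi r0 r1 r2) ->
  (forall t0 t1 t2, ext_coboundary b c e f t0 t1 t2 -> psi t0 t1 t2 = 0) ->
  (forall t0 t1 t2, ext_cocycle z x b c e f t0 t1 t2 -> psi t0 t1 t2 = 0 ->
     ext_coboundary b c e f t0 t1 t2) ->
  ext_cocycle z x b c e f s0 s1 s2 -> psi s0 s1 s2 = 1 ->
  Ext1_iso_L z x b c e f.
Proof.
move=> psi_lin psiB psiZ Zs psis; exists s0, s1, s2; split=> //.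
  by move/psiB; rewrite psis; apply/eqP; rewrite oner_eq0.
move=> t0 t1 t2 Zt; exists (psi t0 t1 t2); apply: psiZ; first exact: cocycle_subr.
by rewrite psi_lin psis mulr1 subrr.
Qed.

Hypotheses (hz0 : z != 0) (hz2 : z ^+ 2 != 1).

Let hz1 : z != 1. Proof. by apply: contraNneq hz2 => ->; rewrite expr1n. Qed.

Lemma shift_neq v w : b = v * e -> v != w -> b != w * e.
Proof. by move=> ->; apply: contra_neq => /(mulIf he0). Qed.

(* b = z e: the class of an extension is measured by t0. *)
Lemma Ext1_shift1 : b = z * e -> Ext1_iso_L z x b c e f.
Proof.
move=> hb; have hbe : b != e by rewrite -[X in _ != X]mul1r (shift_neq hb).
have hb2 : b != z ^+ 2 * e.
  by apply: (shift_neq hb); rewrite expr2 -{1}[z]mulr1 (inj_eq (mulfI hz0)) eq_sym.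
have hb2' : b - z ^+ 2 * e != 0 by rewrite subr_eq0.
apply: (@Ext1_iso_L_of_functional (fun t0 _ _ => t0) 1 (e * b / (b - z ^+ 2 * e)) 0).
- by move=> *.
- by move=> t0 t1 t2 /(coboundaryP hbe)[].
- move=> t0 t1 t2 Z ht0; apply/(coboundaryP hbe); split => //.
  by apply: cocycle_form_eq0; rewrite -?ht0.
- by apply/cocycleP; split; [rewrite hb; ring | rewrite /cocycle_form; field].
- by [].
Qed.

(* b = z^2 e: the class of an extension is measured by phi(t1,t2). *)
Lemma Ext1_shift2 : b = z ^+ 2 * e -> Ext1_iso_L z x b c e f.
Proof.
move=> hb; have hbe : b != e by rewrite -[X in _ != X]mul1r (shift_neq hb).
have hb1 : b != z * e.
  by apply: (shift_neq hb); rewrite expr2 -[X in _ != X]mulr1 (inj_eq (mulfI hz0)).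
apply: (@Ext1_iso_L_of_functional (fun _ t1 t2 => cocycle_form t1 t2) 0 x^-1 0).
- by move=> *; rewrite cocycle_form_subr.
- by move=> t0 t1 t2 /(coboundaryP hbe)[].
- move=> t0 t1 t2 Z hform; apply/(coboundaryP hbe); split => //.
  exact: cocycle_head_eq0 Z.
- by apply/cocycleP; split; [ring | rewrite hb subrr; ring].
- by rewrite /cocycle_form mulr0 addr0 mulfV.
Qed.

(* b = e: the cocycles form the line t0 = 0, phi = 0, measured by t1. *)
Lemma Ext1_diag : b = e -> Ext1_iso_L z x b c e f.
Proof.
move=> hbe; have hb : b = 1 * e by rewrite mul1r.
have hb1 : b != z * e by apply: (shift_neq hb); rewrite eq_sym.
have hb2 : b != z ^+ 2 * e by apply: (shift_neq hb); rewrite eq_sym.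
have form_s : cocycle_form e (- c) = 0.
  by rewrite /cocycle_form mulrN -(mulrA e) hbc mulrC subrr.
apply: (@Ext1_iso_L_of_functional (fun _ t1 _ => t1 / e) 0 e (- c)).
- by move=> *; ring.
- by move=> t0 t1 t2 /(coboundary_diagP hbe)[_ -> _]; rewrite mul0r.
- move=> t0 t1 t2 Z /eqP; rewrite mulf_eq0 invr_eq0 (negPf he0) orbF => /eqP ht1.
  have ht0 := cocycle_head_eq0 hb1 Z; rewrite ht0 in Z.
  have := cocycle_form_eq0 hb2 Z; rewrite ht1 => /cocycle_form_eq0P ht2.
  by apply/(coboundary_diagP hbe); split; rewrite // ht2; ring.
- by apply/cocycleP; rewrite form_s; split; ring.
- by rewrite divff.
Qed.
End Extensions.

Theorem proposition6p1 (K L : fieldType) (iota : {rmorphism K -> L})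
  (n : nat) (zeta x : K) (b c e f : L) :
  n.-primitive_root zeta -> zeta ^+ 2 != 1 -> x != 0 ->
  b * c = iota x -> e * f = iota x ->
  let z := iota zeta in
  let xL := iota x in
  ((b = z * e /\ f = z * c) \/ (b = z ^+ 2 * e /\ f = z ^+ 2 * c) \/ (b = e /\ c = f)
     -> Ext1_iso_L z xL b c e f) /\
  (~ ((b = z * e /\ f = z * c) \/ (b = z ^+ 2 * e /\ f = z ^+ 2 * c) \/ (b = e /\ c = f))
     -> Ext1_zero z xL b c e f).
Proof.
move=> prim hzeta2 hx hbc hef z xL.
have hz0 : z != 0 by rewrite fmorph_eq0 (prim_root_eq0 prim) -lt0n (prim_order_gt0 prim).
have hz2 : z ^+ 2 != 1 by rewrite -rmorphXn fmorph_eq1.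
have hxL : xL != 0 by rewrite fmorph_eq0.
have shift := partner_shift hbc hef hxL.
split=> [[[hb _] | [[hb _] | [hb _]]] | hn].
- exact: Ext1_shift1.
- exact: Ext1_shift2.
- exact: Ext1_diag.
apply: Ext1_zero_generic => //; apply/eqP => hb; apply: hn.
- by left; split; last exact: shift.
- by right; left; split; last exact: shift.
- by right; right; split; last by rewrite (shift 1) ?mul1r.
Qed.
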